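(* Let $\lambda\in\mathbb R$ and $G_\lambda(x)=\frac{x^3}{8} - \frac{\lambda x^2}{2} + \frac{\lambda^2 x}{2}$. For $a\ge 1\vee 3\lambda$ and any constant $r\ge 0$, \[\int_a^\infty y^{r} e^{-G_\lambda(y)}\, dy = \frac{a^{r}}{G_\lambda'(a)}e^{-G_\lambda(a)}\Big(1 + O\big(\tfrac{1}{a^3}\big)\Big),\] where the implied constant depends only on $r$.
   Context: $G'_\lambda$ is the derivative of $G_\lambda$; $x\vee y=\max(x,y)$. $f=g(1+O(h))$ means $|f-g|\le C|g|h$. *)

From Stdlib Require Import Reals.
From Coquelicot Require Import Coquelicot.
Open Scope R_scope.

Definition G (lam x : R) : R := x ^ 3 / 8 - lam * x ^ 2 / 2 + lam ^ 2 * x / 2.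

Definition integrand (lam r y : R) : R := Rpower y r * exp (- G lam y).

Definition main_term (lam r a : R) : R :=
  Rpower a r / Derive (G lam) a * exp (- G lam a).

(** Let [phi y = y^r e^{-G y} / G' y], so that [main_term = phi a].  Then
    [phi' = -y^r e^{-G} (1 - q)] with [q = r/(y G') - G''/G'^2], and for
    [y >= a >= max(1, 3 lam)] the bounds [G' >= 7 y^2/72] and
    [y^3 G'' <= 144 G'^2] give [|q| <= K := (11 r + 144)/a^3].  Writing [F b]
    for the integral over [[a, b]], [(1 - K) F + phi] is thus nonincreasing and
    [(1 + K) F + phi] nondecreasing; letting [b -> oo], where [phi b -> 0],
    gives [(1 - K) I <= phi a <= (1 + K) I], i.e. [|I - phi a| <= K I].
    Finally [I <= e^{3 (r+1)^2} phi a]: by the expansion of [G] at [a] and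
    [r t - t^3/8 <= 3 (r+1)^2], the integrand at [y] is at most [e^{3 (r+1)^2}]
    times its value at [a] times [e^{-G'(a) (y - a)}]. *)

From Stdlib Require Import Reals Psatz.
From Coquelicot Require Import Coquelicot.
Open Scope R_scope.

Lemma ln_le_shift a y : 1 <= a -> a <= y -> ln y <= ln a + (y - a).
Proof.
  intros Ha Hy.
  assert (y <= a * exp (y - a)) by (pose proof (exp_ineq1_le (y - a)); nra).
  rewrite <- (ln_exp (y - a)), <- ln_mult by (try lra; apply exp_pos).
  apply ln_le; lra.
Qed.

Lemma linear_sub_cubic_le r t : 0 <= r -> 0 <= t ->
  r * t - t ^ 3 / 8 <= 3 * (r + 1) ^ 2.
Proof.
  intros Hr Ht. destruct (Rle_or_lt t (3 * (r + 1))).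
  - assert (r * t <= r * (3 * (r + 1))) by (apply Rmult_le_compat_l; lra). nra.
  - assert (9 * (r + 1) ^ 2 <= t ^ 2) by nra. nra.
Qed.

Lemma is_derive_nonpos_le (W W' : R -> R) a b : a <= b ->
  (forall x, a <= x <= b -> is_derive W x (W' x)) ->
  (forall x, a <= x <= b -> W' x <= 0) -> W b <= W a.
Proof.
  intros Hab HW HW'.
  destruct (MVT_gen W a b W') as [c [Hc Heq]];
    rewrite ?Rmin_left, ?Rmax_right in * by lra.
  - intros x Hx. apply HW; lra.
  - intros x Hx. apply continuity_pt_filterlim,
      (ex_derive_continuous (K := R_AbsRing) (V := R_NormedModule)).
    exists (W' x). apply HW; lra.
  - assert (W' c <= 0) by (apply HW'; lra). nra.
Qed.

Lemma is_derive_nonneg_le (W W' : R -> R) a b : a <= b ->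
  (forall x, a <= x <= b -> is_derive W x (W' x)) ->
  (forall x, a <= x <= b -> 0 <= W' x) -> W a <= W b.
Proof.
  intros Hab HW HW'.
  enough (- W b <= - W a) by lra.
  apply (is_derive_nonpos_le (fun x => - W x) (fun x => - W' x)); auto.
  - intros x Hx. apply (is_derive_opp W), HW; lra.
  - intros x Hx. specialize (HW' x Hx). lra.
Qed.

Lemma is_derive_RInt_halfline (f : R -> R) c a y :
  (forall z, c < z -> continuous f z) -> c < a -> c < y ->
  is_derive (RInt f a) y (f y).
Proof.
  intros Hf Ha Hy. apply (is_derive_RInt f (RInt f a) a); [|apply Hf; lra].
  assert (Hd : 0 < (y - c) / 2) by lra.
  exists (mkposreal _ Hd). intros z Hz.
  change (Rabs (z - y) < (y - c) / 2) in Hz. apply Rabs_def2 in Hz.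
  apply (RInt_correct (V := R_CompleteNormedModule)),
    (ex_RInt_continuous (V := R_CompleteNormedModule)).
  intros w Hw. apply Hf.
  assert (c < Rmin a z) by (apply Rmin_glb_lt; lra). lra.
Qed.

Lemma is_lim_le_p_infty (f g : R -> R) a (lf lg : R) :
  (forall x, a <= x -> f x <= g x) ->
  is_lim f p_infty lf -> is_lim g p_infty lg -> lf <= lg.
Proof.
  intros Hfg Hf Hg. apply (is_lim_le_loc f g p_infty lf lg); auto.
  exists a. intros x Hx. apply Hfg. lra.
Qed.

Lemma is_lim_p_infty_of_nondecreasing (F : R -> R) a M :
  (forall x y, a <= x -> x <= y -> F x <= F y) ->
  (forall x, a <= x -> F x <= M) ->
  exists l : R, is_lim F p_infty l.
Proof.
  intros HF HM.
  destruct (completeness (fun v => exists x, a <= x /\ v = F x))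
    as [l [l_ub l_least]].
  - exists M. intros v [x [Hx ->]]. auto.
  - exists (F a), a. split; [lra | reflexivity].
  - exists l. apply is_lim_spec. intros eps. pose proof (cond_pos eps).
    assert (exists x0, a <= x0 /\ l - eps < F x0) as [x0 [Hx0 Hl]].
    { apply Classical_Prop.NNPP. intros Hnone.
      enough (l <= l - eps) by lra.
      apply l_least. intros v [x [Hx ->]].
      apply Rnot_lt_le. intros Hlt. apply Hnone. eauto. }
    exists x0. intros y Hy.
    assert (F y <= l) by (apply l_ub; exists y; split; [lra | reflexivity]).
    assert (F x0 <= F y) by (apply HF; lra).
    apply Rabs_lt_between'. lra.
Qed.

Lemma is_RInt_gen_p_infty_of_is_lim (f : R -> R) a (l : R) :
  (forall b, a <= b -> ex_RInt f a b) ->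
  is_lim (RInt f a) p_infty l ->
  is_RInt_gen f (at_point a) (Rbar_locally p_infty) l.
Proof.
  intros Hf Hl P HP. destruct (Hl P HP) as [M HM].
  apply Filter_prod with (fun x => x = a) (fun y => Rmax a M < y).
  - reflexivity.
  - exists (Rmax a M). auto.
  - intros x y -> Hy. exists (RInt f a y). split.
    + apply (RInt_correct (V := R_CompleteNormedModule)), Hf.
      pose proof (Rmax_l a M). lra.
    + apply HM. pose proof (Rmax_r a M). lra.
Qed.

Lemma is_lim_exp_decay g a : 0 < g ->
  is_lim (fun y => exp (- g * (y - a))) p_infty 0.
Proof.
  intros Hg.
  apply (is_lim_comp exp (fun y => - g * (y - a)) p_infty 0 m_infty).
  - exact is_lim_exp_m.
  - apply is_lim_spec. intros M. exists (a + Rabs M / g). intros x Hx.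
    assert (Rabs M < g * (x - a)) by (rewrite Rmult_comm; apply Rlt_div_l; lra).
    pose proof (Rle_abs (- M)). rewrite Rabs_Ropp in *. lra.
  - exists 0. discriminate.
Qed.

Definition dG (lam y : R) := 3 * y ^ 2 / 8 - lam * y + lam ^ 2 / 2.
Definition d2G (lam y : R) := 3 * y / 4 - lam.

Lemma is_derive_G lam y : is_derive (G lam) y (dG lam y).
Proof. unfold G, dG. auto_derive; auto. field. Qed.

Lemma dG_ge lam y : 1 <= y -> 3 * lam <= y -> 7 * y ^ 2 / 72 <= dG lam y.
Proof. intros. unfold dG. destruct (Rle_or_lt 0 lam); nra. Qed.

Lemma d2G_ge0 lam y : 0 <= y -> 3 * lam <= y -> 0 <= d2G lam y.
Proof. unfold d2G. intros. lra. Qed.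

(* Both [G'] and [G''] factor through [u = y - 2 lam] and [v = y - 2 lam / 3],
   which are at least [y / 3]. *)
Lemma d2G_le_dG_sq lam y : 1 <= y -> 3 * lam <= y ->
  y ^ 3 * d2G lam y <= 144 * dG lam y ^ 2.
Proof.
  intros H1 H2.
  replace (dG lam y) with (3/8 * (y - 2 * lam) * (y - 2 * lam / 3))
    by (unfold dG; field).
  replace (d2G lam y) with (3/8 * ((y - 2 * lam) + (y - 2 * lam / 3)))
    by (unfold d2G; field).
  set (u := y - 2 * lam). set (v := y - 2 * lam / 3).
  assert (y / 3 <= u) by (unfold u; destruct (Rle_or_lt 0 lam); lra).
  assert (y / 3 <= v) by (unfold v; destruct (Rle_or_lt 0 lam); lra).
  assert (y ^ 2 / 9 <= u * v) by nra.
  assert (y * (u + v) / 6 <= u * v) by nra.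
  assert (y ^ 2 / 9 * (y * (u + v) / 6) <= (u * v) * (u * v))
    by (apply Rmult_le_compat; nra).
  nra.
Qed.

Lemma G_shift_ge lam a t : 0 < a -> 3 * lam <= a -> 0 <= t ->
  G lam a + dG lam a * t + t ^ 3 / 8 <= G lam (a + t).
Proof.
  intros. unfold G, dG.
  assert (0 <= (3 * a / 4 - lam) * t ^ 2 / 2)
    by (apply Rmult_le_pos; [apply Rmult_le_pos; nra | lra]).
  nra.
Qed.

Lemma integrand_pos lam r y : 0 < integrand lam r y.
Proof. apply Rmult_lt_0_compat; [apply exp_pos | apply exp_pos]. Qed.

Lemma continuous_integrand lam r y : 0 < y -> continuous (integrand lam r) y.
Proof.
  intros Hy. apply (ex_derive_continuous (K := R_AbsRing) (V := R_NormedModule)).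
  unfold integrand, Rpower, G. auto_derive. auto.
Qed.

Lemma integrand_le_exp_decay lam r a y :
  0 <= r -> 1 <= a -> a <= y -> 3 * lam <= a ->
  integrand lam r y <=
  exp (3 * (r + 1) ^ 2) * integrand lam r a * exp (- dG lam a * (y - a)).
Proof.
  intros Hr Ha Hy Hl. unfold integrand, Rpower.
  rewrite <- !exp_plus. apply Rnot_lt_le. intros Hlt%exp_lt_inv.
  assert (Hln := ln_le_shift a y Ha Hy).
  assert (HG := G_shift_ge lam a (y - a) ltac:(lra) Hl ltac:(lra)).
  replace (a + (y - a)) with y in HG by ring.
  assert (Hcubic := linear_sub_cubic_le r (y - a) Hr ltac:(lra)).
  assert (r * ln y <= r * (ln a + (y - a))) by (apply Rmult_le_compat_l; lra).
  nra.
Qed.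

Definition tail_term (lam r y : R) := integrand lam r y / dG lam y.
Definition tail_defect (lam r y : R) :=
  r / (y * dG lam y) - d2G lam y / dG lam y ^ 2.

Lemma main_term_eq_tail_term lam r a : main_term lam r a = tail_term lam r a.
Proof.
  unfold main_term, tail_term, integrand.
  rewrite (is_derive_unique _ _ _ (is_derive_G lam a)). unfold Rdiv. ring.
Qed.

Lemma is_derive_tail_term lam r y : 0 < y -> 0 < dG lam y ->
  is_derive (tail_term lam r) y (integrand lam r y * (tail_defect lam r y - 1)).
Proof.
  intros Hy HD. unfold tail_term, tail_defect, integrand, Rpower, dG, d2G in *.
  auto_derive.
  - repeat split; try lra. exists (dG lam y). apply is_derive_G.
  - replace (Derive (fun x => G lam x) y) with (dG lam y)
      by (symmetry; apply is_derive_unique, is_derive_G).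
    unfold dG. field. lra.
Qed.

Lemma tail_defect_bound lam r a y : 0 <= r -> 1 <= a -> a <= y -> 3 * lam <= a ->
  Rabs (tail_defect lam r y) <= (11 * r + 144) / a ^ 3.
Proof.
  intros Hr Ha Hy Hl.
  assert (HD := dG_ge lam y ltac:(lra) ltac:(lra)).
  assert (HE := d2G_ge0 lam y ltac:(lra) ltac:(lra)).
  assert (HDE := d2G_le_dG_sq lam y ltac:(lra) ltac:(lra)).
  unfold tail_defect. set (D := dG lam y) in *. set (E := d2G lam y) in *.
  assert (0 < D) by nra.
  assert (0 < y ^ 3) by (apply pow_lt; lra).
  assert (0 <= y ^ 2 / D <= 72 / 7)
    by (split; [apply Rdiv_le_0_compat | apply Rle_div_l]; nra).
  assert (0 <= y ^ 3 * E / D ^ 2 <= 144)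
    by (split; [apply Rdiv_le_0_compat | apply Rle_div_l]; nra).
  replace (r / (y * D) - E / D ^ 2)
    with ((r * (y ^ 2 / D) - y ^ 3 * E / D ^ 2) / y ^ 3) by (field; lra).
  rewrite Rabs_div, (Rabs_pos_eq (y ^ 3)) by lra.
  apply Rle_trans with ((11 * r + 144) / y ^ 3).
  - apply Rmult_le_compat_r; [left; apply Rinv_0_lt_compat; lra |].
    apply Rabs_le. nra.
  - apply Rmult_le_compat_l; [lra |].
    apply Rinv_le_contravar; [apply pow_lt; lra | apply pow_incr; lra].
Qed.

Section TailIntegral.

Variables lam r a : R.
Hypotheses (r_ge0 : 0 <= r) (a_ge1 : 1 <= a) (a_ge_3lam : 3 * lam <= a).

Local Notation F := (RInt (integrand lam r) a).
Local Notation phi := (tail_term lam r).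
Local Notation K := ((11 * r + 144) / a ^ 3).
Local Notation B := (exp (3 * (r + 1) ^ 2)).

Lemma dG_pos y : a <= y -> 0 < dG lam y.
Proof. intros Hy. pose proof (dG_ge lam y ltac:(lra) ltac:(lra)). nra. Qed.

Lemma tail_term_pos y : a <= y -> 0 < phi y.
Proof.
  intros Hy. apply Rdiv_lt_0_compat; [apply integrand_pos | apply dG_pos; lra].
Qed.

Lemma is_derive_RInt_integrand y : 0 < y -> is_derive F y (integrand lam r y).
Proof.
  intros Hy. apply (is_derive_RInt_halfline _ 0); [|lra | lra].
  intros z Hz. apply continuous_integrand, Hz.
Qed.

Lemma RInt_integrand_nondecreasing x y : a <= x -> x <= y -> F x <= F y.
Proof.
  intros Hx Hxy. apply (is_derive_nonneg_le F (integrand lam r)); auto.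
  - intros z Hz. apply is_derive_RInt_integrand. lra.
  - intros z _. left. apply integrand_pos.
Qed.

Lemma tail_term_sandwich b : a <= b ->
  (1 - K) * F b + phi b <= phi a <= (1 + K) * F b + phi b.
Proof.
  intros Hb.
  assert (HFa : F a = 0) by apply (RInt_point (V := R_CompleteNormedModule)).
  assert (Hderiv : forall k x, a <= x ->
    is_derive (fun y => k * F y + phi y) x
      (k * integrand lam r x + integrand lam r x * (tail_defect lam r x - 1))).
  { intros k x Hx. apply (is_derive_plus (fun y => k * F y) phi).
    - apply (is_derive_scal F). apply is_derive_RInt_integrand. lra.
    - apply is_derive_tail_term; [lra | apply dG_pos, Hx]. }
  assert (Hdefect : forall x, a <= x -> - K <= tail_defect lam r x <= K).
  { intros x Hx. apply Rabs_le_between, tail_defect_bound; auto. }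
  split.
  - enough (H : (1 - K) * F b + phi b <= (1 - K) * F a + phi a)
      by (rewrite HFa in H; lra).
    refine (is_derive_nonpos_le _ _ a b Hb (fun x Hx => Hderiv _ x (proj1 Hx)) _).
    intros x Hx. specialize (Hdefect x (proj1 Hx)).
    pose proof (integrand_pos lam r x). nra.
  - enough (H : (1 + K) * F a + phi a <= (1 + K) * F b + phi b)
      by (rewrite HFa in H; lra).
    refine (is_derive_nonneg_le _ _ a b Hb (fun x Hx => Hderiv _ x (proj1 Hx)) _).
    intros x Hx. specialize (Hdefect x (proj1 Hx)).
    pose proof (integrand_pos lam r x). nra.
Qed.

Lemma RInt_integrand_le b : a <= b -> F b <= B * phi a.
Proof.
  intros Hb.
  set (g := dG lam a). assert (Hg : 0 < g) by (apply dG_pos; lra).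
  set (c := B * integrand lam r a / g).
  assert (Hc : 0 < c) by (apply Rdiv_lt_0_compat;
    [apply Rmult_lt_0_compat; [apply exp_pos | apply integrand_pos] | lra]).
  assert (HFa : F a = 0) by apply (RInt_point (V := R_CompleteNormedModule)).
  assert (Hmono : F b + c * exp (- g * (b - a)) <= F a + c * exp (- g * (a - a))).
  { refine (is_derive_nonpos_le (fun y => F y + c * exp (- g * (y - a)))
      (fun y => integrand lam r y + - (B * integrand lam r a * exp (- g * (y - a))))
      a b Hb _ _).
    - intros x Hx. apply (is_derive_plus F (fun y => c * exp (- g * (y - a)))).
      + apply is_derive_RInt_integrand. lra.
      + auto_derive; auto. unfold c, Rminus. field. lra.
    - intros x Hx.
      pose proof (integrand_le_exp_decay lam r a x r_ge0 a_ge1 (proj1 Hx) a_ge_3lam)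
        as Hdecay.
      fold g in Hdecay. lra. }
  rewrite HFa, Rminus_diag, Rmult_0_r, exp_0 in Hmono.
  assert (0 < c * exp (- g * (b - a)))
    by (apply Rmult_lt_0_compat; [lra | apply exp_pos]).
  replace (B * phi a) with c by (unfold c, tail_term, Rdiv; fold g; ring).
  lra.
Qed.

Lemma is_lim_tail_term : is_lim phi p_infty 0.
Proof.
  set (g := dG lam a). assert (Hg : 0 < g) by (apply dG_pos; lra).
  set (c := B * integrand lam r a).
  apply (is_lim_le_le_loc (fun _ => 0) (fun y => 72 / 7 * c * exp (- g * (y - a)))).
  - exists a. intros y Hy. split; [left; apply tail_term_pos; lra |].
    unfold tail_term. apply Rle_div_l; [apply dG_pos; lra |].
    pose proof (integrand_le_exp_decay lam r a y r_ge0 a_ge1 (Rlt_le _ _ Hy) a_ge_3lam)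
      as Hdecay.
    pose proof (dG_ge lam y ltac:(lra) ltac:(lra)).
    fold g c in Hdecay. set (X := c * exp (- g * (y - a))) in *.
    assert (0 <= X) by (unfold X, c; apply Rmult_le_pos; left;
      [apply Rmult_lt_0_compat; [apply exp_pos | apply integrand_pos] | apply exp_pos]).
    replace (72 / 7 * c * exp (- g * (y - a))) with (72 / 7 * X) by (unfold X; ring).
    assert (7 / 72 <= dG lam y) by nra.
    nra.
  - apply is_lim_const.
  - replace (Finite 0) with (Rbar_mult (72 / 7 * c) 0) by (simpl; f_equal; ring).
    apply is_lim_scal_l, is_lim_exp_decay, Hg.
Qed.

Lemma tail_integral_asymptotics :
  exists I, is_RInt_gen (integrand lam r) (at_point a) (Rbar_locally p_infty) I /\
    Rabs (I - phi a) <= K * B * phi a.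
Proof.
  destruct (is_lim_p_infty_of_nondecreasing F a (B * phi a)
    RInt_integrand_nondecreasing RInt_integrand_le) as [I HI].
  exists I. split.
  - apply is_RInt_gen_p_infty_of_is_lim; auto.
    intros b Hb. apply (ex_RInt_continuous (V := R_CompleteNormedModule)).
    intros z Hz. apply continuous_integrand. rewrite Rmin_left in Hz; lra.
  - assert (HFa : F a = 0) by apply (RInt_point (V := R_CompleteNormedModule)).
    assert (HK : 0 <= K)
      by (apply Rdiv_le_0_compat; [lra | apply pow_lt; lra]).
    assert (Hphi := tail_term_pos a (Rle_refl a)).
    assert (HI0 : 0 <= I).
    { apply (is_lim_le_p_infty (fun _ => 0) F a); [| apply is_lim_const | exact HI].
      intros b Hb. rewrite <- HFa. apply RInt_integrand_nondecreasing; lra. }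
    pose proof (is_lim_le_p_infty F (fun _ => B * phi a) a _ _
      RInt_integrand_le HI (is_lim_const _ _)) as HIB.
    assert (Hup : (1 - K) * I <= phi a).
    { apply (is_lim_le_p_infty (fun b => (1 - K) * F b) (fun _ => phi a) a).
      - intros b Hb. pose proof (tail_term_sandwich b Hb).
        pose proof (tail_term_pos b Hb). lra.
      - exact (is_lim_scal_l F (1 - K) p_infty I HI).
      - apply is_lim_const. }
    assert (Hlo : phi a <= (1 + K) * I + 0).
    { apply (is_lim_le_p_infty (fun _ => phi a) (fun b => (1 + K) * F b + phi b) a).
      - intros b Hb. apply tail_term_sandwich, Hb.
      - apply is_lim_const.
      - apply (is_lim_plus' (fun b => (1 + K) * F b) phi p_infty).
        + exact (is_lim_scal_l F (1 + K) p_infty I HI).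
        + exact is_lim_tail_term. }
    apply Rabs_le. nra.
Qed.

End TailIntegral.

Theorem lemma5p2 :
  forall r : R, 0 <= r ->
  exists C : R, forall lam a : R, Rmax 1 (3 * lam) <= a ->
    exists I : R,
      is_RInt_gen (integrand lam r) (at_point a) (Rbar_locally p_infty) I /\
      Rabs (I - main_term lam r a) <= C * Rabs (main_term lam r a) * / a ^ 3.
Proof.
  intros r Hr. exists ((11 * r + 144) * exp (3 * (r + 1) ^ 2)).
  intros lam a Ha.
  assert (a_ge1 : 1 <= a) by (eapply Rle_trans; [apply Rmax_l | exact Ha]).
  assert (a_ge_3lam : 3 * lam <= a) by (eapply Rle_trans; [apply Rmax_r | exact Ha]).
  destruct (tail_integral_asymptotics lam r a Hr a_ge1 a_ge_3lam) as [I [HI Hbound]].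
  exists I. split; [exact HI |].
  rewrite main_term_eq_tail_term, (Rabs_pos_eq (tail_term lam r a))
    by (left; apply (tail_term_pos lam r a); lra).
  replace ((11 * r + 144) * exp (3 * (r + 1) ^ 2) * tail_term lam r a * / a ^ 3)
    with ((11 * r + 144) / a ^ 3 * exp (3 * (r + 1) ^ 2) * tail_term lam r a)
    by (unfold Rdiv; ring).
  exact Hbound.
Qed.
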